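(* Let $G$ be a finite group of odd order and $\alpha$ an automorphism of $G$. Then $|\{g\in G:\alpha(g)=g^3\}|\leq[G:\mathrm{fix}(\alpha)]$, where $\mathrm{fix}(\alpha)=\{g\in G:\alpha(g)=g\}$. In particular, if $|\{g\in G:\alpha(g)=g^3\}|=\rho|G|$ with $\rho>0$, then $|\mathrm{fix}(\alpha)|\leq\rho^{-1}$. *)

From HB Require Import structures.
From mathcomp Require Import all_boot all_order all_algebra all_fingroup.
Set Implicit Arguments. Unset Strict Implicit. Unset Printing Implicit Defensive.

Definition fixAut (gT : finGroupType) (G : {set gT}) (a : {perm gT}) : {set gT} :=
  [set g in G | a g == g].

Definition cubeAut (gT : finGroupType) (G : {set gT}) (a : {perm gT}) : {set gT} :=
  [set g in G | a g == (g ^+ 3)%g].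

(** The map [g |-> g^-1 * a g] is constant on the right cosets of [fix(a)],
    so it factors through [G / fix(a)] and takes at most [#|G : fix(a)|]
    values.  On [{g | a g = g^3}] it is [g |-> g^2], which is injective
    because squaring is invertible in a group of odd order. *)

From HB Require Import structures.
From mathcomp Require Import all_boot all_order all_algebra all_fingroup.
From mathcomp Require Import cyclic.
Import Order.TTheory GRing.Theory Num.Theory.

Section CosetCount.

Variables (gT : finGroupType) (T : finType) (H G : {group gT}).

Lemma card_le_indexg_rcoset_constant (A : {set gT}) (f : gT -> T) :
    A \subset G -> {in A &, injective f} ->
    {in H & G, forall h g, f (h * g)%g = f g} ->
  (#|A| <= #|G : H|%g)%N.
Proof.
move=> sAG injf fH; rewrite -(card_in_imset injf).
apply: leq_trans (leq_imset_card (fun C => f (repr C)) (rcosets H G)).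
apply/subset_leq_card/subsetP => _ /imsetP[g Ag ->]; have Gg := subsetP sAG g Ag.
apply/imsetP; exists (H :* g)%g; first by apply/rcosetsP; exists g.
by case: repr_rcosetP => h Hh; rewrite fH.
Qed.

End CosetCount.

Lemma expg2_in_inj_odd {gT : finGroupType} {G : {group gT}} :
  odd #|G| -> {in G &, forall x y, x ^+ 2 = y ^+ 2 -> x = y}%g.
Proof.
rewrite -coprimen2 => /expgK sqrtK x y Gx Gy sq_xy.
by rewrite -(sqrtK x Gx) -(sqrtK y Gy) /= sq_xy.
Qed.

Definition autTwist {gT : finGroupType} (a : {perm gT}) (g : gT) : gT :=
  (g^-1 * a g)%g.

Section FixedPointsOfAutomorphism.

Context {gT : finGroupType} {G : {group gT}} {a : {perm gT}}.
Hypothesis AutGa : a \in Aut G.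

Lemma aut1 : a 1%g = 1%g.
Proof. by rewrite -(autmE AutGa) morph1. Qed.

Lemma aut_mul : {in G &, {morph a : x y / (x * y)%g}}.
Proof. by move=> x y Gx Gy; rewrite -(autmE AutGa) morphM. Qed.

Lemma fixAut_group_set : group_set (fixAut G a).
Proof.
apply/group_setP; split.
  by apply/setIdP; rewrite group1 aut1.
move=> x y /setIdP[Gx /eqP ax] /setIdP[Gy /eqP ay].
by apply/setIdP; rewrite groupM // aut_mul // ax ay.
Qed.

Canonical fixAut_group := Group fixAut_group_set.

Lemma fixAut_sub : fixAut G a \subset G.
Proof. by apply/subsetP => x; rewrite inE => /andP[]. Qed.

Lemma autTwist_rcoset :
  {in fixAut G a & G, forall f g, autTwist a (f * g)%g = autTwist a g}.
Proof.
move=> f g; rewrite /autTwist inE => /andP[Gf /eqP af] Gg.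
by rewrite aut_mul // af invMg -mulgA mulKg.
Qed.

Lemma autTwist_cubeAut : {in cubeAut G a, forall g, autTwist a g = (g ^+ 2)%g}.
Proof. by move=> g; rewrite /autTwist inE => /andP[_ /eqP ->]; rewrite expgS mulKg. Qed.

Lemma cubeAut_sub : cubeAut G a \subset G.
Proof. by apply/subsetP => x; rewrite inE => /andP[]. Qed.

Lemma card_cubeAut_le_indexg :
  odd #|G| -> (#|cubeAut G a| <= #|G : fixAut G a|%g)%N.
Proof.
move=> oddG; apply: (@card_le_indexg_rcoset_constant _ _ fixAut_group G _
  (autTwist a) cubeAut_sub _ autTwist_rcoset).
move=> x y Cx Cy; rewrite !autTwist_cubeAut //.
by apply: (expg2_in_inj_odd oddG); apply: (subsetP cubeAut_sub).
Qed.

End FixedPointsOfAutomorphism.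

Lemma card_le_inv_density {R : numFieldType} {gT : finGroupType}
    (H G : {group gT}) (A : {set gT}) (rho : R) :
  H \subset G -> (#|A| <= #|G : H|%g)%N -> (0 < rho)%R ->
  (#|A|%:R = rho * #|G|%:R)%R -> (#|H|%:R <= rho^-1)%R.
Proof.
move=> sHG leAG rho_gt0 densA.
have : (#|H| * #|A| <= #|G|)%N by rewrite -(Lagrange sHG) leq_mul2l leAG orbT.
rewrite -(ler_nat R) natrM densA mulrA -[X in (_ <= X)%R]mul1r.
by rewrite ler_pM2r ?ltr0n ?cardG_gt0 // -ler_pdivlMr // div1r.
Qed.

Theorem mainTheorem7 (gT : finGroupType) (G : {group gT}) (a : {perm gT}) :
  odd #|G| -> a \in Aut G ->
  (#|cubeAut G a| <= #|G : (fixAut G a)|%g)%N /\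
  (forall rho : rat, (0 < rho)%R ->
     (#|cubeAut G a|%:R = rho * #|G|%:R :> rat)%R ->
     (#|fixAut G a|%:R <= rho^-1 :> rat)%R).
Proof.
move=> oddG AutGa; have leCF := card_cubeAut_le_indexg AutGa oddG.
split=> // rho.
exact: card_le_inv_density (fixAut_group AutGa) G _ _ fixAut_sub leCF.
Qed.
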